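(* Let $\mathfrak g=\mathfrak g_{-3}\oplus\cdots\oplus\mathfrak g_3$ be the $\mathbb Z$-grading of $\mathfrak g=G(3)$ associated with $\mathfrak p_2^{\rm IV}$ and $\mathfrak m=\mathfrak g_{-3}\oplus\mathfrak g_{-2}\oplus\mathfrak g_{-1}$. Then $H^{0,1}(\mathfrak m_{\bar1},\mathfrak g)\cong\mathfrak{sp}(2)$, whereas $H^{d,1}(\mathfrak m_{\bar1},\mathfrak g)=0$ for all $d>0$.
   Context: $G(3)$: complex exceptional simple Lie superalgebra of dimension $(17|14)$, $\mathfrak g_{\bar0}=G(2)\oplus\mathfrak{sp}(2)$, $\mathfrak g_{\bar1}=\mathbb C^7\boxtimes\mathbb C^2$. With even roots $\pm2\delta,\pm\epsilon_i,\epsilon_i-\epsilon_j$ and odd roots $\pm\delta,\pm\delta\pm\epsilon_i$ ($\epsilon_1+\epsilon_2+\epsilon_3=0$), take simple roots $\alpha_1=\epsilon_2-\epsilon_1,\alpha_2=\epsilon_1-\delta,\alpha_3=\delta$ with dual basis $\mathsf Z_1,\mathsf Z_2,\mathsf Z_3$; the grading is the eigenspace decomposition of $\mathrm{ad}\,\mathsf Z_2$ (so $\mathfrak{sp}(2)\subset\mathfrak g_0$). Let $C^\bullet(\mathfrak m,\mathfrak g)=\mathfrak g\otimes\Lambda^\bullet\mathfrak m^*$ be the Chevalley–Eilenberg complex of $\mathfrak m$ with coefficients in the adjoint module, graded by degree ($\mathfrak g_j^*$ of degree $-j$). $C^\bullet(\mathfrak m_{\bar1},\mathfrak g)$ denotes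 the subcomplex with $C^0(\mathfrak m_{\bar1},\mathfrak g)=0$ and, for $n\ge1$, consisting of the $n$-cochains that vanish when all arguments lie in $\mathfrak m_{\bar0}$; $H^{d,n}(\mathfrak m_{\bar1},\mathfrak g)$ is its cohomology in degree $d$. *)

From HB Require Import structures.
From mathcomp Require Import all_boot all_order all_algebra.
Set Implicit Arguments. Unset Strict Implicit. Unset Printing Implicit Defensive.
Import Order.TTheory GRing.Theory Num.Theory.
Local Open Scope ring_scope.

(* The exceptional Lie superalgebra G(3), given by explicit structure         *)
(* constants in a homogeneous weight basis e_0, ..., e_30.                    *)
(*  * e_0 .. e_13  : a basis of G(2) (e_0, e_1 Cartan, the others root        *)
(*                   vectors),  realised as the derivation algebra of the     *)
(*                   split octonions (Zorn vector-matrix model), acting on    *)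
(*                   the 7-dimensional imaginary octonions C^7;               *)
(*  * e_14,e_15,e_16: the standard basis E, H, F of sp(2) = sl(2);            *)
(*  * e_17 .. e_30 : the odd part C^7 (x) C^2, e_(17+2a+s) = u_a (x) w_s,     *)
(*                   u_a the weight basis of C^7, w_0, w_1 the basis of C^2.  *)
(*  even-even : commutator; even-odd : natural action;                        *)
(*  odd-odd   : [u(x)a, v(x)b] = 2/3 B(u,v) rho(a,b) + omega(a,b) pi(u^v),     *)
(*              B the G(2)-invariant form on C^7, omega the symplectic form   *)
(*              on C^2, rho(a,b) = omega(a,-)b + omega(b,-)a in sp(2), pi the *)
(*              orthogonal projection so(7) -> G(2).                          *)
(* The ratio 2/3 is the unique one for which the super Jacobi identity holds; *)
(* this identity, and super skew-symmetry, were checked exactly (over Q) for  *)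
(* all 31^3 basis triples.  The result is the (unique) simple Lie superalgebra *)
(* of type G(3), of dimension (17|14).                                        *)
(* g3_table lists the nonzero structure constants: ((i,j,k),(p,q)) means that *)
(* the coefficient of e_k in [e_i, e_j] is p/q.                               *)
(* g3_weights lists the weight of e_i as (a,b,c), meaning a*delta + b*eps_1 + *)
(* c*eps_2 (recall eps_3 = -eps_1 - eps_2).  The roots are exactly the even   *)
(* roots +-2delta, +-eps_i, eps_i - eps_j and the odd roots +-delta,          *)
(* +-delta +- eps_i.                                                          *)
(* With simple roots alpha_1 = eps_2 - eps_1, alpha_2 = eps_1 - delta,        *)
(* alpha_3 = delta one has delta = alpha_3, eps_1 = alpha_2 + alpha_3,        *)
(* eps_2 = alpha_1 + alpha_2 + alpha_3; hence the eigenvalue of ad Z_2 (Z_2   *)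
(* dual to alpha_2) on a vector of weight a*delta + b*eps_1 + c*eps_2 is b+c. *)

Definition g3_table : seq ((nat * nat * nat) * (int * nat)) :=
  [:: ((0,2,2),((- 1%:Z),1));
     ((0,3,3),(1%:Z,1));
     ((0,5,5),((- 1%:Z),1));
     ((0,6,6),((- 2%:Z),1));
     ((0,7,7),(1%:Z,1));
     ((0,8,8),((- 1%:Z),1));
     ((0,9,9),(2%:Z,1));
     ((0,10,10),(1%:Z,1));
     ((0,12,12),((- 1%:Z),1));
     ((0,13,13),(1%:Z,1));
     ((0,19,19),(1%:Z,1));
     ((0,20,20),(1%:Z,1));
     ((0,21,21),((- 1%:Z),1));
     ((0,22,22),((- 1%:Z),1));
     ((0,25,25),((- 1%:Z),1));
     ((0,26,26),((- 1%:Z),1));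
     ((0,27,27),(1%:Z,1));
     ((0,28,28),(1%:Z,1));
     ((1,2,2),((- 2%:Z),1));
     ((1,3,3),((- 1%:Z),1));
     ((1,4,4),((- 1%:Z),1));
     ((1,5,5),((- 1%:Z),1));
     ((1,6,6),((- 1%:Z),1));
     ((1,9,9),(1%:Z,1));
     ((1,10,10),(1%:Z,1));
     ((1,11,11),(1%:Z,1));
     ((1,12,12),(1%:Z,1));
     ((1,13,13),(2%:Z,1));
     ((1,19,19),(1%:Z,1));
     ((1,20,20),(1%:Z,1));
     ((1,23,23),((- 1%:Z),1));
     ((1,24,24),((- 1%:Z),1));
     ((1,25,25),((- 1%:Z),1));
     ((1,26,26),((- 1%:Z),1));
     ((1,29,29),(1%:Z,1));
     ((1,30,30),(1%:Z,1));
     ((2,0,2),(1%:Z,1));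
     ((2,1,2),(2%:Z,1));
     ((2,9,3),((- 1%:Z),1));
     ((2,10,4),((- 1%:Z),1));
     ((2,11,5),(1%:Z,1));
     ((2,12,6),(1%:Z,1));
     ((2,13,1),((- 1%:Z),1));
     ((2,19,23),((- 1%:Z),1));
     ((2,20,24),((- 1%:Z),1));
     ((2,29,25),(1%:Z,1));
     ((2,30,26),(1%:Z,1));
     ((3,0,3),((- 1%:Z),1));
     ((3,1,3),(1%:Z,1));
     ((3,6,2),((- 1%:Z),1));
     ((3,8,4),(1%:Z,1));
     ((3,11,7),(1%:Z,1));
     ((3,12,0),(1%:Z,1));
     ((3,12,1),((- 1%:Z),1));
     ((3,13,9),(1%:Z,1));
     ((3,21,23),((- 1%:Z),1));
     ((3,22,24),((- 1%:Z),1));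
     ((3,29,27),(1%:Z,1));
     ((3,30,28),(1%:Z,1));
     ((4,1,4),(1%:Z,1));
     ((4,5,2),(3%:Z,2));
     ((4,7,3),(3%:Z,2));
     ((4,8,5),(4%:Z,1));
     ((4,10,7),(4%:Z,1));
     ((4,11,0),((- 1%:Z),2));
     ((4,11,1),(1%:Z,1));
     ((4,12,8),((- 1%:Z),1));
     ((4,13,10),(1%:Z,1));
     ((4,17,23),(2%:Z,1));
     ((4,18,24),(2%:Z,1));
     ((4,19,27),(1%:Z,1));
     ((4,20,28),(1%:Z,1));
     ((4,21,25),((- 1%:Z),1));
     ((4,22,26),((- 1%:Z),1));
     ((4,29,17),((- 1%:Z),1));
     ((4,30,18),((- 1%:Z),1));
     ((5,0,5),(1%:Z,1));
     ((5,1,5),(1%:Z,1));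
     ((5,4,2),((- 3%:Z),2));
     ((5,7,4),(1%:Z,2));
     ((5,8,6),(3%:Z,2));
     ((5,9,7),((- 1%:Z),1));
     ((5,10,0),(1%:Z,2));
     ((5,10,1),(1%:Z,2));
     ((5,11,8),(1%:Z,2));
     ((5,13,11),((- 1%:Z),1));
     ((5,17,25),(1%:Z,1));
     ((5,18,26),(1%:Z,1));
     ((5,19,17),((- 1%:Z),2));
     ((5,20,18),((- 1%:Z),2));
     ((5,27,23),(1%:Z,2));
     ((5,28,24),(1%:Z,2));
     ((5,29,21),((- 1%:Z),2));
     ((5,30,22),((- 1%:Z),2));
     ((6,0,6),(2%:Z,1));
     ((6,1,6),(1%:Z,1));
     ((6,3,2),(1%:Z,1));
     ((6,7,5),(1%:Z,1));
     ((6,9,0),((- 1%:Z),1));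
     ((6,10,8),(1%:Z,1));
     ((6,13,12),((- 1%:Z),1));
     ((6,19,21),((- 1%:Z),1));
     ((6,20,22),((- 1%:Z),1));
     ((6,27,25),(1%:Z,1));
     ((6,28,26),(1%:Z,1));
     ((7,0,7),((- 1%:Z),1));
     ((7,4,3),((- 3%:Z),2));
     ((7,5,4),((- 1%:Z),2));
     ((7,6,5),((- 1%:Z),1));
     ((7,8,0),(1%:Z,1));
     ((7,8,1),((- 1%:Z),2));
     ((7,10,9),((- 3%:Z),2));
     ((7,11,10),(1%:Z,2));
     ((7,12,11),((- 1%:Z),1));
     ((7,17,27),(1%:Z,1));
     ((7,18,28),(1%:Z,1));
     ((7,21,17),((- 1%:Z),2));
     ((7,22,18),((- 1%:Z),2));
     ((7,25,23),((- 1%:Z),2));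
     ((7,26,24),((- 1%:Z),2));
     ((7,29,19),(1%:Z,2));
     ((7,30,20),(1%:Z,2));
     ((8,0,8),(1%:Z,1));
     ((8,3,4),((- 1%:Z),1));
     ((8,4,5),((- 4%:Z),1));
     ((8,5,6),((- 3%:Z),2));
     ((8,7,0),((- 1%:Z),1));
     ((8,7,1),(1%:Z,2));
     ((8,9,10),((- 1%:Z),1));
     ((8,10,11),(4%:Z,1));
     ((8,11,12),((- 3%:Z),2));
     ((8,17,21),((- 2%:Z),1));
     ((8,18,22),((- 2%:Z),1));
     ((8,19,29),(1%:Z,1));
     ((8,20,30),(1%:Z,1));
     ((8,23,25),((- 1%:Z),1));
     ((8,24,26),((- 1%:Z),1));
     ((8,27,17),(1%:Z,1));
     ((8,28,18),(1%:Z,1));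
     ((9,0,9),((- 2%:Z),1));
     ((9,1,9),((- 1%:Z),1));
     ((9,2,3),(1%:Z,1));
     ((9,5,7),(1%:Z,1));
     ((9,6,0),(1%:Z,1));
     ((9,8,10),(1%:Z,1));
     ((9,12,13),((- 1%:Z),1));
     ((9,21,19),((- 1%:Z),1));
     ((9,22,20),((- 1%:Z),1));
     ((9,25,27),(1%:Z,1));
     ((9,26,28),(1%:Z,1));
     ((10,0,10),((- 1%:Z),1));
     ((10,1,10),((- 1%:Z),1));
     ((10,2,4),(1%:Z,1));
     ((10,4,7),((- 4%:Z),1));
     ((10,5,0),((- 1%:Z),2));
     ((10,5,1),((- 1%:Z),2));
     ((10,6,8),((- 1%:Z),1));
     ((10,7,9),(3%:Z,2));
     ((10,8,11),((- 4%:Z),1));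
     ((10,11,13),(3%:Z,2));
     ((10,17,19),(2%:Z,1));
     ((10,18,20),(2%:Z,1));
     ((10,21,29),(1%:Z,1));
     ((10,22,30),(1%:Z,1));
     ((10,23,27),((- 1%:Z),1));
     ((10,24,28),((- 1%:Z),1));
     ((10,25,17),((- 1%:Z),1));
     ((10,26,18),((- 1%:Z),1));
     ((11,1,11),((- 1%:Z),1));
     ((11,2,5),((- 1%:Z),1));
     ((11,3,7),((- 1%:Z),1));
     ((11,4,0),(1%:Z,2));
     ((11,4,1),((- 1%:Z),1));
     ((11,5,8),((- 1%:Z),2));
     ((11,7,10),((- 1%:Z),2));
     ((11,8,12),(3%:Z,2));
     ((11,10,13),((- 3%:Z),2));
     ((11,17,29),(1%:Z,1));
     ((11,18,30),(1%:Z,1));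
     ((11,23,17),((- 1%:Z),2));
     ((11,24,18),((- 1%:Z),2));
     ((11,25,21),(1%:Z,2));
     ((11,26,22),(1%:Z,2));
     ((11,27,19),((- 1%:Z),2));
     ((11,28,20),((- 1%:Z),2));
     ((12,0,12),(1%:Z,1));
     ((12,1,12),((- 1%:Z),1));
     ((12,2,6),((- 1%:Z),1));
     ((12,3,0),((- 1%:Z),1));
     ((12,3,1),(1%:Z,1));
     ((12,4,8),(1%:Z,1));
     ((12,7,11),(1%:Z,1));
     ((12,9,13),(1%:Z,1));
     ((12,23,21),((- 1%:Z),1));
     ((12,24,22),((- 1%:Z),1));
     ((12,27,29),(1%:Z,1));
     ((12,28,30),(1%:Z,1));
     ((13,0,13),((- 1%:Z),1));
     ((13,1,13),((- 2%:Z),1));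
     ((13,2,1),(1%:Z,1));
     ((13,3,9),((- 1%:Z),1));
     ((13,4,10),((- 1%:Z),1));
     ((13,5,11),(1%:Z,1));
     ((13,6,12),(1%:Z,1));
     ((13,23,19),((- 1%:Z),1));
     ((13,24,20),((- 1%:Z),1));
     ((13,25,29),(1%:Z,1));
     ((13,26,30),(1%:Z,1));
     ((14,15,14),((- 2%:Z),1));
     ((14,16,15),(1%:Z,1));
     ((14,18,17),(1%:Z,1));
     ((14,20,19),(1%:Z,1));
     ((14,22,21),(1%:Z,1));
     ((14,24,23),(1%:Z,1));
     ((14,26,25),(1%:Z,1));
     ((14,28,27),(1%:Z,1));
     ((14,30,29),(1%:Z,1));
     ((15,14,14),(2%:Z,1));
     ((15,16,16),((- 2%:Z),1));
     ((15,17,17),(1%:Z,1));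
     ((15,18,18),((- 1%:Z),1));
     ((15,19,19),(1%:Z,1));
     ((15,20,20),((- 1%:Z),1));
     ((15,21,21),(1%:Z,1));
     ((15,22,22),((- 1%:Z),1));
     ((15,23,23),(1%:Z,1));
     ((15,24,24),((- 1%:Z),1));
     ((15,25,25),(1%:Z,1));
     ((15,26,26),((- 1%:Z),1));
     ((15,27,27),(1%:Z,1));
     ((15,28,28),((- 1%:Z),1));
     ((15,29,29),(1%:Z,1));
     ((15,30,30),((- 1%:Z),1));
     ((16,14,15),((- 1%:Z),1));
     ((16,15,16),(2%:Z,1));
     ((16,17,18),(1%:Z,1));
     ((16,19,20),(1%:Z,1));
     ((16,21,22),(1%:Z,1));
     ((16,23,24),(1%:Z,1));
     ((16,25,26),(1%:Z,1));
     ((16,27,28),(1%:Z,1));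
     ((16,29,30),(1%:Z,1));
     ((17,4,23),((- 2%:Z),1));
     ((17,5,25),((- 1%:Z),1));
     ((17,7,27),((- 1%:Z),1));
     ((17,8,21),(2%:Z,1));
     ((17,10,19),((- 2%:Z),1));
     ((17,11,29),((- 1%:Z),1));
     ((17,15,17),((- 1%:Z),1));
     ((17,16,18),((- 1%:Z),1));
     ((17,17,14),((- 8%:Z),3));
     ((17,18,15),(4%:Z,3));
     ((17,20,10),(2%:Z,3));
     ((17,22,8),((- 2%:Z),3));
     ((17,24,4),(2%:Z,3));
     ((17,26,5),(4%:Z,3));
     ((17,28,7),(4%:Z,3));
     ((17,30,11),(4%:Z,3));
     ((18,4,24),((- 2%:Z),1));
     ((18,5,26),((- 1%:Z),1));
     ((18,7,28),((- 1%:Z),1));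
     ((18,8,22),(2%:Z,1));
     ((18,10,20),((- 2%:Z),1));
     ((18,11,30),((- 1%:Z),1));
     ((18,14,17),((- 1%:Z),1));
     ((18,15,18),(1%:Z,1));
     ((18,17,15),(4%:Z,3));
     ((18,18,16),(8%:Z,3));
     ((18,19,10),((- 2%:Z),3));
     ((18,21,8),(2%:Z,3));
     ((18,23,4),((- 2%:Z),3));
     ((18,25,5),((- 4%:Z),3));
     ((18,27,7),((- 4%:Z),3));
     ((18,29,11),((- 4%:Z),3));
     ((19,0,19),((- 1%:Z),1));
     ((19,1,19),((- 1%:Z),1));
     ((19,2,23),(1%:Z,1));
     ((19,4,27),((- 1%:Z),1));
     ((19,5,17),(1%:Z,2));
     ((19,6,21),(1%:Z,1));
     ((19,8,29),((- 1%:Z),1));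
     ((19,15,19),((- 1%:Z),1));
     ((19,16,20),((- 1%:Z),1));
     ((19,18,10),((- 2%:Z),3));
     ((19,22,11),(2%:Z,3));
     ((19,24,7),((- 2%:Z),3));
     ((19,25,14),((- 4%:Z),3));
     ((19,26,0),((- 1%:Z),3));
     ((19,26,1),((- 1%:Z),3));
     ((19,26,15),(2%:Z,3));
     ((19,28,9),(1%:Z,1));
     ((19,30,13),(1%:Z,1));
     ((20,0,20),((- 1%:Z),1));
     ((20,1,20),((- 1%:Z),1));
     ((20,2,24),(1%:Z,1));
     ((20,4,28),((- 1%:Z),1));
     ((20,5,18),(1%:Z,2));
     ((20,6,22),(1%:Z,1));
     ((20,8,30),((- 1%:Z),1));
     ((20,14,19),((- 1%:Z),1));
     ((20,15,20),(1%:Z,1));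
     ((20,17,10),(2%:Z,3));
     ((20,21,11),((- 2%:Z),3));
     ((20,23,7),(2%:Z,3));
     ((20,25,0),(1%:Z,3));
     ((20,25,1),(1%:Z,3));
     ((20,25,15),(2%:Z,3));
     ((20,26,16),(4%:Z,3));
     ((20,27,9),((- 1%:Z),1));
     ((20,29,13),((- 1%:Z),1));
     ((21,0,21),(1%:Z,1));
     ((21,3,23),(1%:Z,1));
     ((21,4,25),(1%:Z,1));
     ((21,7,17),(1%:Z,2));
     ((21,9,19),(1%:Z,1));
     ((21,10,29),((- 1%:Z),1));
     ((21,15,21),((- 1%:Z),1));
     ((21,16,22),((- 1%:Z),1));
     ((21,18,8),(2%:Z,3));
     ((21,20,11),((- 2%:Z),3));
     ((21,24,5),(2%:Z,3));
     ((21,26,6),(1%:Z,1));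
     ((21,27,14),((- 4%:Z),3));
     ((21,28,0),(2%:Z,3));
     ((21,28,1),((- 1%:Z),3));
     ((21,28,15),(2%:Z,3));
     ((21,30,12),(1%:Z,1));
     ((22,0,22),(1%:Z,1));
     ((22,3,24),(1%:Z,1));
     ((22,4,26),(1%:Z,1));
     ((22,7,18),(1%:Z,2));
     ((22,9,20),(1%:Z,1));
     ((22,10,30),((- 1%:Z),1));
     ((22,14,21),((- 1%:Z),1));
     ((22,15,22),(1%:Z,1));
     ((22,17,8),((- 2%:Z),3));
     ((22,19,11),(2%:Z,3));
     ((22,23,5),((- 2%:Z),3));
     ((22,25,6),((- 1%:Z),1));
     ((22,27,0),((- 2%:Z),3));
     ((22,27,1),(1%:Z,3));
     ((22,27,15),(2%:Z,3));
     ((22,28,16),(4%:Z,3));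
     ((22,29,12),((- 1%:Z),1));
     ((23,1,23),(1%:Z,1));
     ((23,8,25),(1%:Z,1));
     ((23,10,27),(1%:Z,1));
     ((23,11,17),(1%:Z,2));
     ((23,12,21),(1%:Z,1));
     ((23,13,19),(1%:Z,1));
     ((23,15,23),((- 1%:Z),1));
     ((23,16,24),((- 1%:Z),1));
     ((23,18,4),((- 2%:Z),3));
     ((23,20,7),(2%:Z,3));
     ((23,22,5),((- 2%:Z),3));
     ((23,26,2),(1%:Z,1));
     ((23,28,3),(1%:Z,1));
     ((23,29,14),((- 4%:Z),3));
     ((23,30,0),((- 1%:Z),3));
     ((23,30,1),(2%:Z,3));
     ((23,30,15),(2%:Z,3));
     ((24,1,24),(1%:Z,1));
     ((24,8,26),(1%:Z,1));
     ((24,10,28),(1%:Z,1));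
     ((24,11,18),(1%:Z,2));
     ((24,12,22),(1%:Z,1));
     ((24,13,20),(1%:Z,1));
     ((24,14,23),((- 1%:Z),1));
     ((24,15,24),(1%:Z,1));
     ((24,17,4),(2%:Z,3));
     ((24,19,7),((- 2%:Z),3));
     ((24,21,5),(2%:Z,3));
     ((24,25,2),((- 1%:Z),1));
     ((24,27,3),((- 1%:Z),1));
     ((24,29,0),(1%:Z,3));
     ((24,29,1),((- 2%:Z),3));
     ((24,29,15),(2%:Z,3));
     ((24,30,16),(4%:Z,3));
     ((25,0,25),(1%:Z,1));
     ((25,1,25),(1%:Z,1));
     ((25,7,23),(1%:Z,2));
     ((25,9,27),((- 1%:Z),1));
     ((25,10,17),(1%:Z,1));
     ((25,11,21),((- 1%:Z),2));
     ((25,13,29),((- 1%:Z),1));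
     ((25,15,25),((- 1%:Z),1));
     ((25,16,26),((- 1%:Z),1));
     ((25,18,5),((- 4%:Z),3));
     ((25,19,14),((- 4%:Z),3));
     ((25,20,0),(1%:Z,3));
     ((25,20,1),(1%:Z,3));
     ((25,20,15),(2%:Z,3));
     ((25,22,6),((- 1%:Z),1));
     ((25,24,2),((- 1%:Z),1));
     ((25,28,4),(1%:Z,3));
     ((25,30,8),(1%:Z,3));
     ((26,0,26),(1%:Z,1));
     ((26,1,26),(1%:Z,1));
     ((26,7,24),(1%:Z,2));
     ((26,9,28),((- 1%:Z),1));
     ((26,10,18),(1%:Z,1));
     ((26,11,22),((- 1%:Z),2));
     ((26,13,30),((- 1%:Z),1));
     ((26,14,25),((- 1%:Z),1));
     ((26,15,26),(1%:Z,1));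
     ((26,17,5),(4%:Z,3));
     ((26,19,0),((- 1%:Z),3));
     ((26,19,1),((- 1%:Z),3));
     ((26,19,15),(2%:Z,3));
     ((26,20,16),(4%:Z,3));
     ((26,21,6),(1%:Z,1));
     ((26,23,2),(1%:Z,1));
     ((26,27,4),((- 1%:Z),3));
     ((26,29,8),((- 1%:Z),3));
     ((27,0,27),((- 1%:Z),1));
     ((27,5,23),((- 1%:Z),2));
     ((27,6,25),((- 1%:Z),1));
     ((27,8,17),((- 1%:Z),1));
     ((27,11,19),(1%:Z,2));
     ((27,12,29),((- 1%:Z),1));
     ((27,15,27),((- 1%:Z),1));
     ((27,16,28),((- 1%:Z),1));
     ((27,18,7),((- 4%:Z),3));
     ((27,20,9),((- 1%:Z),1));
     ((27,21,14),((- 4%:Z),3));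
     ((27,22,0),((- 2%:Z),3));
     ((27,22,1),(1%:Z,3));
     ((27,22,15),(2%:Z,3));
     ((27,24,3),((- 1%:Z),1));
     ((27,26,4),((- 1%:Z),3));
     ((27,30,10),(1%:Z,3));
     ((28,0,28),((- 1%:Z),1));
     ((28,5,24),((- 1%:Z),2));
     ((28,6,26),((- 1%:Z),1));
     ((28,8,18),((- 1%:Z),1));
     ((28,11,20),(1%:Z,2));
     ((28,12,30),((- 1%:Z),1));
     ((28,14,27),((- 1%:Z),1));
     ((28,15,28),(1%:Z,1));
     ((28,17,7),(4%:Z,3));
     ((28,19,9),(1%:Z,1));
     ((28,21,0),(2%:Z,3));
     ((28,21,1),((- 1%:Z),3));
     ((28,21,15),(2%:Z,3));
     ((28,22,16),(4%:Z,3));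
     ((28,23,3),(1%:Z,1));
     ((28,25,4),(1%:Z,3));
     ((28,29,10),((- 1%:Z),3));
     ((29,1,29),((- 1%:Z),1));
     ((29,2,25),((- 1%:Z),1));
     ((29,3,27),((- 1%:Z),1));
     ((29,4,17),(1%:Z,1));
     ((29,5,21),(1%:Z,2));
     ((29,7,19),((- 1%:Z),2));
     ((29,15,29),((- 1%:Z),1));
     ((29,16,30),((- 1%:Z),1));
     ((29,18,11),((- 4%:Z),3));
     ((29,20,13),((- 1%:Z),1));
     ((29,22,12),((- 1%:Z),1));
     ((29,23,14),((- 4%:Z),3));
     ((29,24,0),(1%:Z,3));
     ((29,24,1),((- 2%:Z),3));
     ((29,24,15),(2%:Z,3));
     ((29,26,8),((- 1%:Z),3));
     ((29,28,10),((- 1%:Z),3));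
     ((30,1,30),((- 1%:Z),1));
     ((30,2,26),((- 1%:Z),1));
     ((30,3,28),((- 1%:Z),1));
     ((30,4,18),(1%:Z,1));
     ((30,5,22),(1%:Z,2));
     ((30,7,20),((- 1%:Z),2));
     ((30,14,29),((- 1%:Z),1));
     ((30,15,30),(1%:Z,1));
     ((30,17,11),(4%:Z,3));
     ((30,19,13),(1%:Z,1));
     ((30,21,12),(1%:Z,1));
     ((30,23,0),((- 1%:Z),3));
     ((30,23,1),(2%:Z,3));
     ((30,23,15),(2%:Z,3));
     ((30,24,16),(4%:Z,3));
     ((30,25,8),(1%:Z,3));
     ((30,27,10),(1%:Z,3))].

Definition g3_weights : seq (int * int * int) :=
  [:: (0%:Z,0%:Z,0%:Z);
     (0%:Z,0%:Z,0%:Z);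
     (0%:Z,(- 2%:Z),(- 1%:Z));
     (0%:Z,(- 1%:Z),(- 2%:Z));
     (0%:Z,(- 1%:Z),(- 1%:Z));
     (0%:Z,(- 1%:Z),0%:Z);
     (0%:Z,(- 1%:Z),1%:Z);
     (0%:Z,0%:Z,(- 1%:Z));
     (0%:Z,0%:Z,1%:Z);
     (0%:Z,1%:Z,(- 1%:Z));
     (0%:Z,1%:Z,0%:Z);
     (0%:Z,1%:Z,1%:Z);
     (0%:Z,1%:Z,2%:Z);
     (0%:Z,2%:Z,1%:Z);
     (2%:Z,0%:Z,0%:Z);
     (0%:Z,0%:Z,0%:Z);
     ((- 2%:Z),0%:Z,0%:Z);
     (1%:Z,0%:Z,0%:Z);
     ((- 1%:Z),0%:Z,0%:Z);
     (1%:Z,1%:Z,0%:Z);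
     ((- 1%:Z),1%:Z,0%:Z);
     (1%:Z,0%:Z,1%:Z);
     ((- 1%:Z),0%:Z,1%:Z);
     (1%:Z,(- 1%:Z),(- 1%:Z));
     ((- 1%:Z),(- 1%:Z),(- 1%:Z));
     (1%:Z,(- 1%:Z),0%:Z);
     ((- 1%:Z),(- 1%:Z),0%:Z);
     (1%:Z,0%:Z,(- 1%:Z));
     ((- 1%:Z),0%:Z,(- 1%:Z));
     (1%:Z,1%:Z,1%:Z);
     ((- 1%:Z),1%:Z,1%:Z)].

Definition G3dim : nat := 31.
Notation idx := 'I_G3dim.

(* parity of the basis vector e_i : true = odd *)
Definition par (i : idx) : bool := (17 <= i)%N.

Definition wt (i : idx) : int * int * int := nth (0, 0, 0) g3_weights i.
Definition deg (i : idx) : int := (wt i).1.2 + (wt i).2.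

Definition g3c (C : fieldType) (i j k : idx) : C :=
  \sum_(t <- g3_table | t.1 == (nat_of_ord i, nat_of_ord j, nat_of_ord k))
     ((t.2.1)%:~R / (t.2.2)%:R).

(* sp(2) inside g_0 : the span of e_14, e_15, e_16.  Elements of g are
   coordinate row vectors. *)
Definition in_sp2 (C : fieldType) (X : 'rV[C]_G3dim) : Prop :=
  forall j : idx, ~~ (14 <= j <= 16)%N -> X 0 j = 0.

(* m = g_{-3} + g_{-2} + g_{-1} is spanned by the e_i with deg i < 0.
   A 1-cochain phi : m -> g is a matrix: phi(e_i) = \sum_k phi i k e_k
   (rows i with deg i >= 0 are required to vanish).
   C^{d,1}(m_1bar, g): 1-cochains vanishing on m_0bar, of degree d, i.e.
   mapping g_j into g_{j+d}. *)
Definition cochain1 (C : fieldType) (d : int) (phi : 'M[C]_G3dim) : Prop :=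
  forall i k : idx, phi i k != 0 -> [/\ deg i < 0, par i & deg k = deg i + d].

(* Chevalley-Eilenberg differential C^1(m,g) -> C^2(m,g) for the Lie
   superalgebra m with coefficients in the adjoint module; for a homogeneous
   phi of parity |phi|:
     (d phi)(x,y) = (-1)^{|phi||x|}[x,phi y] - (-1)^{|y|(|phi|+|x|)}[y,phi x]
                    - phi [x,y],
   extended linearly (the entry phi j l has parity par j + par l).
   (d phi) i j k is the e_k-coefficient of (d phi)(e_i, e_j). *)
Definition dcoc (C : fieldType) (phi : 'M[C]_G3dim) (i j k : idx) : C :=
  \sum_(l : idx) (-1) ^+ ((par j (+) par l) && par i) * phi j l * g3c C i l k
  - \sum_(l : idx) (-1) ^+ (par j && par l) * phi i l * g3c C j l k
  - \sum_(l : idx) g3c C i j l * phi l k.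

Definition cocycle1 (C : fieldType) (phi : 'M[C]_G3dim) : Prop :=
  forall i j k : idx, deg i < 0 -> deg j < 0 -> dcoc phi i j k = 0.

Definition Z1 (C : fieldType) (d : int) (phi : 'M[C]_G3dim) : Prop :=
  cochain1 d phi /\ cocycle1 phi.

(* B^{d,1}(m_1bar, g) = d(C^{d,0}(m_1bar, g)) = d(0) = 0, since
   C^0(m_1bar, g) = 0 by definition. *)
Definition B1 (C : fieldType) (d : int) (phi : 'M[C]_G3dim) : Prop :=
  phi = 0.

Definition cohomologous (C : fieldType) (d : int) (phi psi : 'M[C]_G3dim) : Prop :=
  B1 d (phi - psi).

Definition ad_m (C : fieldType) (X : 'rV[C]_G3dim) : 'M[C]_G3dim :=
  \matrix_(i, k) (if deg i < 0 then \sum_(j : idx) X 0 j * g3c C j i k else 0).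

From HB Require Import structures.
From mathcomp Require Import all_boot all_order all_algebra.
From mathcomp Require Import zify.
Import Order.TTheory GRing.Theory Num.Theory.
Set Implicit Arguments. Unset Strict Implicit. Unset Printing Implicit Defensive.
Local Open Scope ring_scope.

(* Everything reduces to finite linear algebra over Q.  The structure constants of G(3) are
   rational, so the cocycle condition on a 1-cochain of degree d is a homogeneous linear
   system with rational coefficients in the entries phi a b allowed by degree and parity
   (a odd in m, deg b = deg a + d).  As the grading lives in [-3, 3], there are no such
   entries for d > 6.  For 0 < d <= 6 the system can be "peeled": some equation always
   involves a single remaining unknown, which must therefore vanish, and repeating this
   kills every unknown.  For d = 0, ad X restricted to m is a cocycle for X in sp(2) (the
   Jacobi identity, checked by computation), and X is recovered from the three entries of
   ad X that describe the standard action of sp(2) on the odd part <e_23, e_24> of g_{-2}.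
   Subtracting that ad X from a 0-cocycle kills these three entries, and peeling does the
   rest. *)

Lemma foldr_sum (R : nmodType) (T : Type) (F : T -> R) (r : seq T) :
  foldr (fun t s => F t + s) 0 r = \sum_(t <- r) F t.
Proof. by elim: r => [|t r IH]; rewrite ?big_nil // big_cons -IH. Qed.

Lemma sum_ord_iota (R : nmodType) (n : nat) (P : pred nat) (F : nat -> R) :
  (forall i : 'I_n, ~~ P i -> F i = 0) ->
  \sum_(i < n) F i = \sum_(x <- iota 0 n | P x) F x.
Proof.
move=> F0; rewrite -(big_mkord xpredT) /index_iota subn0 [RHS]big_mkcond.
rewrite big_seq [RHS]big_seq; apply: eq_bigr => x; rewrite mem_iota => /= lt_xn.
by case: ifP => // /negbT; apply: (F0 (Ordinal lt_xn)).
Qed.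

Definition ord_pairs (n : nat) : seq (nat * nat) := [seq (a, b) | a <- iota 0 n, b <- iota 0 n].

Lemma mem_ord_pairs (n : nat) (a b : 'I_n) : (a : nat, b : nat) \in ord_pairs n.
Proof. by apply: allpairs_f; rewrite mem_iota ltn_ord. Qed.

Lemma sum_ord_pairs (R : nmodType) (n : nat) (P : pred (nat * nat)) (F : nat * nat -> R) :
  (forall a b : 'I_n, ~~ P (a : nat, b : nat) -> F (a : nat, b : nat) = 0) ->
  \sum_(a < n) \sum_(b < n) F (a : nat, b : nat) = \sum_(u <- ord_pairs n | P u) F u.
Proof.
move=> F0; rewrite [RHS]big_mkcond big_allpairs.
rewrite (sum_ord_iota (P := xpredT) (F := fun a => \sum_(b < n) F (a, b : nat))) //.
rewrite big_seq [RHS]big_seq.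
apply: eq_bigr => a; rewrite mem_iota => /= lt_an.
rewrite (sum_ord_iota (P := xpredT) (F := fun b => F (a, b))) // big_seq [RHS]big_seq.
apply: eq_bigr => b; rewrite mem_iota => /= lt_bn; case: ifP => // /negbT.
exact: (F0 (Ordinal lt_an) (Ordinal lt_bn)).
Qed.

Section Peeling.

Variables (R : numFieldType) (n : nat) (E : eqType) (coef : E -> nat * nat -> rat).
Implicit Types (phi : 'M[R]_n) (S : seq (nat * nat)).

Definition satisfies phi (e : E) : Prop :=
  \sum_(a < n) \sum_(b < n) ratr (coef e (a : nat, b : nat)) * phi a b = 0.

Definition vanishes_off phi S : Prop :=
  forall a b : 'I_n, (a : nat, b : nat) \notin S -> phi a b = 0.

(* Each row pairs an equation with its support among the remaining unknowns S; a row with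
   a single unknown forces that unknown to vanish, and it is removed everywhere. *)
Fixpoint peel (fuel : nat) S (rows : seq (E * seq (nat * nat))) : bool :=
  if S is [::] then true else
  if fuel is fuel'.+1 then
    if [seq r <- rows | size r.2 == 1%N] is (_, [:: u]) :: _ then
      peel fuel' [seq v <- S | v != u] [seq (r.1, [seq v <- r.2 | v != u]) | r <- rows]
    else false
  else false.

Definition peelable (eqns : seq E) S : bool :=
  peel (size S) S [seq (e, [seq u <- S | coef e u != 0]) | e <- eqns].

Definition row_support S (row : E * seq (nat * nat)) : Prop :=
  {in S, forall u, coef row.1 u != 0 -> u \in row.2} /\
  {in row.2, forall u, coef row.1 u != 0}.

Lemma row_support_rem S row u :
  row_support S row ->
  row_support [seq v <- S | v != u] (row.1, [seq v <- row.2 | v != u]).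
Proof.
case=> sub nz; split=> v /=; rewrite mem_filter => /andP[neq_vu v_in].
  by move=> /(sub v v_in); rewrite mem_filter neq_vu.
exact: nz.
Qed.

Lemma vanishes_off_pivot phi S (e : E) u :
  satisfies phi e -> vanishes_off phi S -> row_support S (e, [:: u]) ->
  vanishes_off phi [seq v <- S | v != u].
Proof.
move=> sat van [sub nz] a b; rewrite mem_filter negb_and negbK.
case/orP=> [/eqP ab_u | ab_nS]; last exact: van.
have /eqP := sat; rewrite pair_big (bigD1 (a, b)) //= big1 ?addr0; last first.
  move=> [a' b'] /= ne; have [a'b'_S | a'b'_nS] := boolP ((a' : nat, b' : nat) \in S).
    have [coef0 | /(sub _ a'b'_S)] := eqVneq (coef e (a' : nat, b' : nat)) 0.
      by rewrite coef0 rmorph0 mul0r.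
    by rewrite inE -ab_u => /eqP[/val_inj ea /val_inj eb]; rewrite ea eb eqxx in ne.
  by rewrite van ?mulr0.
by rewrite mulf_eq0 fmorph_eq0 ab_u (negbTE (nz u (mem_head _ _))) => /eqP.
Qed.

Lemma peel_sound phi (eqns : seq E) fuel S rows :
  (forall e, e \in eqns -> satisfies phi e) -> vanishes_off phi S ->
  (forall r, r \in rows -> r.1 \in eqns /\ row_support S r) ->
  peel fuel S rows -> phi = 0.
Proof.
move=> sat; elim: fuel S rows => [|fuel IH] S rows van rows_ok.
  by case: S van rows_ok => [van _ _|//]; apply/matrixP => a b; rewrite mxE van.
case: S van rows_ok => [van _ _|s S van rows_ok].
  by apply/matrixP => a b; rewrite mxE van.
rewrite /=; case piv: [seq r <- rows | size r.2 == 1%N] => [|[e [|u [|? ?]]] rest] //.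
have /rows_ok[e_in supp] : (e, [:: u]) \in rows.
  by have := mem_head (e, [:: u]) rest; rewrite -piv mem_filter => /andP[].
apply: (IH [seq v <- s :: S | v != u]); first exact: vanishes_off_pivot (sat e e_in) van supp.
move=> _ /mapP[r r_in ->]; have [r_eq r_supp] := rows_ok r r_in.
by split=> //; apply: row_support_rem.
Qed.

Lemma peelable_sound phi (eqns : seq E) S :
  (forall e, e \in eqns -> satisfies phi e) -> vanishes_off phi S ->
  peelable eqns S -> phi = 0.
Proof.
move=> sat van; apply: peel_sound sat van _ => _ /mapP[e e_in ->].
by split=> //; split=> [u u_S nz | u]; rewrite mem_filter ?nz ?u_S // => /andP[].
Qed.

End Peeling.

(* g3_table indexed by i, j and k, so that vm_compute looks structure constants up fast. *)
Definition g3tab : seq (seq (seq rat)) :=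
  mkseq (fun i => let rows_i := [seq t <- g3_table | t.1.1.1 == i] in
    mkseq (fun j => let rows_ij := [seq t <- rows_i | t.1.1.2 == j] in
      mkseq (fun k => foldr (fun t s => t.2.1%:~R / t.2.2%:R + s) 0
                            [seq t <- rows_ij | t.1.2 == k]) G3dim) G3dim) G3dim.

Definition g3q (i j k : nat) : rat := nth 0 (nth [::] (nth [::] g3tab i) j) k.

Lemma g3cE (C : numFieldType) (i j k : idx) : g3c C i j k = ratr (g3q i j k).
Proof.
rewrite /g3q /g3tab !nth_mkseq // foldr_sum rmorph_sum /g3c -big_filter -!filter_predI.
apply: congr_big => // [|t _]; last by rewrite fmorph_div rmorph_int rmorph_nat.
by apply: eq_filter => -[[[a b] c] v]; rewrite /= !xpair_eqE; do 3 case: (_ == _).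
Qed.

Definition parn (i : nat) : bool := (17 <= i)%N.
Definition degn (i : nat) : int := let w := nth (0, 0, 0) g3_weights i in w.1.2 + w.2.

Lemma parnE (i : idx) : parn i = par i. Proof. by []. Qed.
Lemma degnE (i : idx) : degn i = deg i. Proof. by []. Qed.

Definition dcoc_coef (e : nat * nat * nat) (u : nat * nat) : rat :=
  let: (i, j, k) := e in let: (a, b) := u in
    (if a == j then (-1) ^+ ((parn j (+) parn b) && parn i) * g3q i b k else 0)
  - (if a == i then (-1) ^+ (parn j && parn b) * g3q j b k else 0)
  - (if b == k then g3q i j a else 0).

Lemma dcocE (C : numFieldType) (phi : 'M[C]_G3dim) (i j k : idx) :
  dcoc phi i j k = \sum_(a < G3dim) \sum_(b < G3dim)
    ratr (dcoc_coef (i : nat, j : nat, k : nat) (a : nat, b : nat)) * phi a b.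
Proof.
have delta (F : idx -> C) (j0 : idx) : \sum_(a : idx) (if (a : nat) == j0 then F a else 0) = F j0.
  by rewrite -big_mkcond big_pred1_eq.
transitivity (\sum_(a : idx) \sum_(b : idx) (
    (if (a : nat) == j then (-1) ^+ ((par j (+) par b) && par i) * phi j b * g3c C i b k else 0)
  - (if (a : nat) == i then (-1) ^+ (par j && par b) * phi i b * g3c C j b k else 0)
  - (if (b : nat) == k then g3c C i j a * phi a k else 0))); last first.
  apply: eq_bigr => a _; apply: eq_bigr => b _.
  rewrite /dcoc_coef !rmorphB !mulrBl !g3cE !parnE.
  by congr (_ - _ - _); case: eqP => [/val_inj->|_];
    rewrite ?rmorph0 ?mul0r // rmorphM rmorph_sign mulrAC.
under eq_bigr => a _ do rewrite !sumrB.
rewrite !sumrB /dcoc; congr (_ - _ - _).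
- by rewrite exchange_big; apply: eq_bigr => b _; rewrite delta.
- by rewrite exchange_big; apply: eq_bigr => b _; rewrite delta.
- by apply: eq_bigr => a _; rewrite delta.
Qed.

Lemma cocycle1B (C : numFieldType) (phi psi : 'M[C]_G3dim) :
  cocycle1 phi -> cocycle1 psi -> cocycle1 (phi - psi).
Proof.
move=> cc_phi cc_psi i j k neg_i neg_j.
have := cc_phi i j k neg_i neg_j; have := cc_psi i j k neg_i neg_j.
rewrite !dcocE => s_psi s_phi.
under eq_bigr => a _ do under eq_bigr => b _ do rewrite !mxE mulrBr.
by under eq_bigr => a _ do rewrite sumrB; rewrite sumrB s_phi s_psi subr0.
Qed.

Definition m_idx : seq nat := [seq i <- iota 0 G3dim | degn i < 0].

Definition m_eqns : seq (nat * nat * nat) :=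
  [seq (ij, k) | ij <- [seq (i, j) | i <- m_idx, j <- m_idx], k <- iota 0 G3dim].

Lemma m_eqnsP (e : nat * nat * nat) :
  reflect (exists i j k : idx, [/\ e = (i : nat, j : nat, k : nat), deg i < 0 & deg j < 0])
          (e \in m_eqns).
Proof.
apply: (iffP allpairsP) => [[[ij k] [/allpairsP[[i j] [i_m j_m ->]] k_lt ->]] |].
  move: i_m j_m k_lt; rewrite !mem_filter !mem_iota => /andP[neg_i i_lt] /andP[neg_j j_lt] k_lt.
  by exists (Ordinal i_lt), (Ordinal j_lt), (Ordinal k_lt); rewrite -!degnE.
case=> i [j [k [-> neg_i neg_j]]]; exists ((i : nat, j : nat), (k : nat)); split=> //.
  by apply: allpairs_f; rewrite mem_filter mem_iota ltn_ord degnE ?neg_i ?neg_j.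
by rewrite mem_iota ltn_ord.
Qed.

Lemma cocycle1_satisfies (C : numFieldType) (phi : 'M[C]_G3dim) e :
  cocycle1 phi -> e \in m_eqns -> satisfies dcoc_coef phi e.
Proof. by move=> cc /m_eqnsP[i [j [k [-> neg_i neg_j]]]]; rewrite /satisfies -dcocE cc. Qed.

Definition cochain_support (d : int) : seq (nat * nat) :=
  [seq u <- ord_pairs G3dim | [&& parn u.1, degn u.1 < 0 & degn u.2 == degn u.1 + d]].

Lemma cochain1P (C : numFieldType) (d : int) (phi : 'M[C]_G3dim) :
  cochain1 d phi <-> vanishes_off phi (cochain_support d).
Proof.
split=> [co a b | van a b].
  apply: contraNeq => /co[neg_a odd_a deg_b].
  by rewrite mem_filter mem_ord_pairs parnE !degnE odd_a neg_a deg_b eqxx.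
move=> nz; have : (a : nat, b : nat) \in cochain_support d.
  by apply: contraNT nz => /van ->; rewrite eqxx.
by rewrite mem_filter parnE !degnE => /andP[/and3P[odd_a neg_a /eqP deg_b] _].
Qed.

Lemma deg_bounds (i : idx) : -3 <= deg i <= 3.
Proof.
have /allP : all (fun i => -3 <= degn i <= 3) (iota 0 G3dim) by [].
by apply; rewrite mem_iota ltn_ord.
Qed.

Lemma cochain1_gt6_eq0 (C : numFieldType) (d : int) (phi : 'M[C]_G3dim) :
  6 < d -> cochain1 d phi -> phi = 0.
Proof.
move=> d_gt6 co; apply/matrixP => a b; rewrite mxE; apply/eqP; apply: contraT => /co[_ _ deg_b].
by move: (deg_bounds a) (deg_bounds b) d_gt6; rewrite deg_b; lia.
Qed.

(* Only equations of the matching degree involve cochains of degree d; dropping the others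
   keeps the computation small. *)
Definition cocycle_eqns (d : int) : seq (nat * nat * nat) :=
  [seq e <- m_eqns | degn e.2 == degn e.1.1 + degn e.1.2 + d].

Lemma peelable_Z1_pos : all (fun d => peelable dcoc_coef (cocycle_eqns d) (cochain_support d))
                         [seq n%:Z | n <- iota 1 6].
Proof. by vm_compute. Qed.

Lemma Z1_pos_eq0 (C : numFieldType) (d : int) (phi : 'M[C]_G3dim) :
  0 < d -> Z1 d phi -> phi = 0.
Proof.
move=> d_gt0 [co cc]; have [d_gt6 | d_le6] := ltrP 6 d; first exact: cochain1_gt6_eq0 co.
move/cochain1P: co => van; apply: (peelable_sound (eqns := cocycle_eqns d) _ van).
  by move=> e; rewrite mem_filter => /andP[_]; apply: cocycle1_satisfies.
apply: (allP peelable_Z1_pos); case: d d_gt0 d_le6 {van cc} => // n n_gt0 n_le6.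
by apply: map_f; rewrite mem_iota; lia.
Qed.

Definition sp2 : seq nat := iota 14 3.

Definition adq (x : nat) (u : nat * nat) : rat := if degn u.1 < 0 then g3q x u.1 u.2 else 0.

Lemma ad_mE (C : numFieldType) (X : 'rV[C]_G3dim) (a b : idx) : in_sp2 X ->
  ad_m X a b = \sum_(x <- sp2) X 0 (inord x) * ratr (adq x (a : nat, b : nat)).
Proof.
move=> sp2X; rewrite mxE /adq /= degnE; case: ifP => _; last first.
  by rewrite big1 // => x _; rewrite rmorph0 mulr0.
under eq_bigr => j _ do rewrite -[j in X 0 j]inord_val -[j in g3c C j]inord_val.
pose F x := X 0 (inord x) * g3c C (inord x) a b.
rewrite (sum_ord_iota (P := fun x => x \in sp2) (F := F)) => [|j]; last first.
  by rewrite /F inord_val mem_iota => /sp2X ->; rewrite mul0r.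
rewrite -[LHS]big_filter (_ : [seq x <- iota 0 G3dim | x \in sp2] = sp2) //.
rewrite big_seq [RHS]big_seq; apply: eq_bigr => x; rewrite mem_iota => /andP[_ lt_x].
by rewrite /F g3cE inordK // (leq_trans lt_x).
Qed.

Lemma adq_support : all (fun x =>
  all (fun u => u \in cochain_support 0) [seq u <- ord_pairs G3dim | adq x u != 0]) sp2.
Proof. by vm_compute. Qed.

Lemma ad_m_cochain (C : numFieldType) (X : 'rV[C]_G3dim) : in_sp2 X -> cochain1 0 (ad_m X).
Proof.
move=> sp2X; apply/cochain1P => a b nsupp; rewrite ad_mE // big_seq big1 // => x x_sp2.
have : (a : nat, b : nat) \in [seq u <- ord_pairs G3dim | adq x u != 0] = false.
  by apply: contraNF nsupp; apply: (allP (allP adq_support x x_sp2)).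
by rewrite mem_filter mem_ord_pairs andbT => /negbFE/eqP ->; rewrite rmorph0 mulr0.
Qed.

(* supp must contain the support of psi; it is an argument so that vm_compute evaluates it
   only once. *)
Definition rat_cocycle (psi : nat * nat -> rat) (supp : seq (nat * nat)) : bool :=
  all (fun e => foldr (fun u s => dcoc_coef e u * psi u + s) 0 supp == 0) m_eqns.

Lemma adq_rat_cocycle :
  all (fun x => rat_cocycle (adq x) [seq u <- ord_pairs G3dim | adq x u != 0]) sp2.
Proof. by vm_compute. Qed.

Lemma adq_cocycle (x : nat) (e : nat * nat * nat) : x \in sp2 -> e \in m_eqns ->
  \sum_(a < G3dim) \sum_(b < G3dim) dcoc_coef e (a : nat, b : nat) * adq x (a : nat, b : nat)
  = 0.
Proof.
move=> x_sp2 e_in; pose F u := dcoc_coef e u * adq x u.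
rewrite (sum_ord_pairs (P := fun u => adq x u != 0) (F := F)).
  have := allP adq_rat_cocycle x x_sp2; rewrite /rat_cocycle => /allP/(_ _ e_in).
  by rewrite foldr_sum big_filter => /eqP.
by move=> a b /negPn/eqP; rewrite /F => ->; rewrite mulr0.
Qed.

Lemma ad_m_cocycle (C : numFieldType) (X : 'rV[C]_G3dim) : in_sp2 X -> cocycle1 (ad_m X).
Proof.
move=> sp2X i j k neg_i neg_j; rewrite dcocE.
under eq_bigr => a _ do under eq_bigr => b _ do rewrite ad_mE // mulr_sumr.
under eq_bigr => a _ do rewrite exchange_big.
rewrite exchange_big big_seq big1 // => x x_sp2.
have e_in : (i : nat, j : nat, k : nat) \in m_eqns by apply/m_eqnsP; exists i, j, k; split.
transitivity (X 0 (inord x) * ratr (\sum_(a < G3dim) \sum_(b < G3dim)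
    dcoc_coef (i : nat, j : nat, k : nat) (a : nat, b : nat) * adq x (a : nat, b : nat))).
  rewrite rmorph_sum mulr_sumr; apply: eq_bigr => a _.
  by rewrite rmorph_sum mulr_sumr; apply: eq_bigr => b _; rewrite rmorphM mulrCA.
by rewrite adq_cocycle // rmorph0 mulr0.
Qed.

(* E, H, F = e_14, e_15, e_16 act on <e_23, e_24> as on the standard module: the entry of
   ad e_x at sp2_pivot x is 1, and the entries of the other two vanish there. *)
Definition sp2_pivot (x : nat) : nat * nat :=
  if x == 14%N then (24, 23) else if x == 15%N then (23, 23) else (23, 24).

Lemma adq_pivot : all (fun y => all (fun x => adq x (sp2_pivot y) == (x == y)%:R) sp2) sp2.
Proof. by vm_compute. Qed.

Lemma sp2_pivot_lt (y : nat) : ((sp2_pivot y).1 < G3dim)%N && ((sp2_pivot y).2 < G3dim)%N.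
Proof. by rewrite /sp2_pivot; case: (y == 14%N); case: (y == 15%N). Qed.

Lemma ad_m_pivot (C : numFieldType) (X : 'rV[C]_G3dim) (y : nat) : in_sp2 X -> y \in sp2 ->
  ad_m X (inord (sp2_pivot y).1) (inord (sp2_pivot y).2) = X 0 (inord y).
Proof.
move=> sp2X y_sp2; have /andP[lt1 lt2] := sp2_pivot_lt y.
rewrite ad_mE // !inordK // -surjective_pairing.
rewrite (eq_big_seq (fun x => if x == y then X 0 (inord y) else 0)) => [|x x_sp2]; last first.
  rewrite (eqP (allP (allP adq_pivot y y_sp2) x x_sp2)).
  by case: eqP => [->|_]; rewrite ?rmorph1 ?rmorph0 ?mulr1 ?mulr0.
by rewrite -big_mkcond big_const_seq count_uniq_mem ?iota_uniq // y_sp2 /= addr0.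
Qed.

Lemma ad_m_eq0 (C : numFieldType) (X : 'rV[C]_G3dim) : in_sp2 X -> ad_m X = 0 -> X = 0.
Proof.
move=> sp2X adX0; apply/rowP => j; rewrite [RHS]mxE.
have [j_sp2 | j_nsp2] := boolP ((j : nat) \in sp2); last by apply: sp2X; rewrite mem_iota in j_nsp2.
by rewrite -[j]inord_val -ad_m_pivot // adX0 mxE.
Qed.

Definition sp2_coord (C : numFieldType) (phi : 'M[C]_G3dim) : 'rV[C]_G3dim :=
  \row_j if (j : nat) \in sp2 then phi (inord (sp2_pivot j).1) (inord (sp2_pivot j).2) else 0.

Lemma sp2_coord_in_sp2 (C : numFieldType) (phi : 'M[C]_G3dim) : in_sp2 (sp2_coord phi).
Proof. by move=> j j_nsp2; rewrite mxE mem_iota (negbTE j_nsp2). Qed.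

Lemma peelable_Z1_0 :
  peelable dcoc_coef (cocycle_eqns 0) [seq u <- cochain_support 0 | u \notin map sp2_pivot sp2].
Proof. by vm_compute. Qed.

Lemma Z1_0_eq_ad (C : numFieldType) (phi : 'M[C]_G3dim) : Z1 0 phi -> phi = ad_m (sp2_coord phi).
Proof.
move=> [/cochain1P phi_van cc]; have sp2X := sp2_coord_in_sp2 phi.
apply/eqP; rewrite -subr_eq0; apply/eqP.
apply: (peelable_sound (eqns := cocycle_eqns 0) _ _ peelable_Z1_0).
  move=> e; rewrite mem_filter => /andP[_]; apply: cocycle1_satisfies.
  exact: cocycle1B cc (ad_m_cocycle sp2X).
move=> a b; rewrite 2!mxE mem_filter negb_and negbK => /orP[/mapP[y y_sp2 ab_y] | nsupp].
  have [-> ->] : a = inord (sp2_pivot y).1 /\ b = inord (sp2_pivot y).2.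
    by rewrite -ab_y /= !inord_val.
  have y_lt : (y < G3dim)%N by move: y_sp2; rewrite mem_iota => /andP[_ /leq_trans]; apply.
  by rewrite ad_m_pivot // mxE inordK // y_sp2 subrr.
by rewrite phi_van // (iffLR (cochain1P _ _) (ad_m_cochain sp2X)) // subrr.
Qed.

Theorem lemma3p14 (C : numClosedFieldType) :
  (* H^{0,1}(m_1bar, g) = sp(2), via X |-> [ad X |_m] *)
  [/\ (forall X : 'rV[C]_G3dim, in_sp2 X -> Z1 0 (ad_m X)),
      (forall X : 'rV[C]_G3dim, in_sp2 X -> cohomologous 0 (ad_m X) 0 -> X = 0),
      (forall phi : 'M[C]_G3dim, Z1 0 phi ->
         exists2 X : 'rV[C]_G3dim, in_sp2 X & cohomologous 0 phi (ad_m X))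
    & (* H^{d,1}(m_1bar, g) = 0 for d > 0 *)
      (forall (d : int) (phi : 'M[C]_G3dim), 0 < d -> Z1 d phi -> cohomologous d phi 0)].
Proof.
rewrite /cohomologous /B1; split.
- by move=> X sp2X; split; [apply: ad_m_cochain | apply: ad_m_cocycle].
- by move=> X sp2X; rewrite subr0; apply: ad_m_eq0.
- move=> phi Z1phi; exists (sp2_coord phi); first exact: sp2_coord_in_sp2.
  by rewrite {1}(Z1_0_eq_ad Z1phi) subrr.
- by move=> d phi d_gt0 Z1phi; rewrite subr0; apply: Z1_pos_eq0 Z1phi.
Qed.
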